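(* Let $X$ be a subshift with HB diagram $\mathcal D$. If $\alpha_0\to\alpha_1\to\dots\to\alpha_{n-1}$ and $\beta_0\to\beta_1\to\dots\to\beta_{n-1}$ are two paths of length $n$ on $\mathcal D$ with $\alpha_0$ and $\beta_0$ blocks of length $1$, then $\hat\pi(\alpha_0\alpha_1\dots\alpha_{n-1})=\hat\pi(\beta_0\beta_1\dots\beta_{n-1})$ if and only if $\alpha_i=\beta_i$ for all $0\le i\le n-1$.
   Context: Let $\mathcal A$ be a finite alphabet and $\sigma$ the shift, $(\sigma x)_i=x_{i+1}$. A one-sided subshift is a nonempty closed $\sigma$-invariant $X^+\subseteq\mathcal A^{\mathbb N}$; its natural extension is $\tilde X=\{x\in\mathcal A^{\mathbb Z}: x_px_{p+1}\dots\in X^+ \text{ for all } p\in\mathbb Z\}$. For a two-sided subshift $X$, $X^+$ is the set of right rays of points of $X$, so $\tilde X=X$. $\mathcal L(\tilde X)$ is the set of finite blocks occurring in $\tilde X$. For $a_{-n}\dots a_0\in\mathcal L(\tilde X)$, $\mathrm{fol}(a_{-n}\dots a_0)=\{b_0b_1\dots\in X^+:\exists b\in\tilde X \text{ with } b_{-n}\dots b_0=a_{-n}\dots a_0\}$. A block $a_{-n}\dots a_0\in\mathcal L(\tilde X)$ with $n\ge1$ is significant if $\mathrm{fol}(a_{-n}\dots a_0)\subsetneq\mathrm{fol}(a_{-n+1}\dots a_0)$; single symbols in $\mathcal L(\tilde X)$ are also counted as significant. $\mathrm{sig}(a_{-n}\dots a_0)$ is the longest significant suffix. The HB diagram $\mathcal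 D$ has vertex set the significant blocks and an arrow $\alpha\to\beta$ iff there is a symbol $b$ with $\alpha b\in\mathcal L(\tilde X)$ and $\beta=\mathrm{sig}(\alpha b)$. The length of a path is its number of vertices; $\hat\pi(\alpha_0\dots\alpha_{k})=a_0\dots a_k$ where $a_i$ is the last symbol of $\alpha_i$. *)

From Stdlib Require Import ZArith.
From mathcomp Require Import all_boot.
Set Implicit Arguments. Unset Strict Implicit. Unset Printing Implicit Defensive.

Section HB.
Variable A : finType.

(* One-sided sequences are [nat -> A], two-sided ones [Z -> A];
   a set of sequences is a predicate. *)

(* X^+ is a one-sided subshift: nonempty, sigma-invariant, and closed in the
   product topology (a point all of whose prefixes occur as prefixes of points
   of X^+ lies in X^+; cylinders form a basis of the topology). *)
Definition one_sided_subshift (X : (nat -> A) -> Prop) : Prop :=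
  [/\ (exists x, X x),
      (forall x, X x -> X (fun i => x i.+1)) &
      (forall x, (forall m, exists y, X y /\ forall i, i < m -> y i = x i) -> X x)].

Definition natext (X : (nat -> A) -> Prop) (x : Z -> A) : Prop :=
  forall p : Z, X (fun i => x (p + Z.of_nat i)%Z).

Definition lang (X : (nat -> A) -> Prop) (w : seq A) : Prop :=
  exists (x : Z -> A) (p : Z),
    natext X x /\ w = [seq x (p + Z.of_nat i)%Z | i <- iota 0 (size w)].

(* fol(a_{-n} ... a_0), where w = a_{-n} ... a_0 has size n+1. *)
Definition fol (X : (nat -> A) -> Prop) (w : seq A) (y : nat -> A) : Prop :=
  X y /\ exists b : Z -> A,
    [/\ natext X b,
        w = [seq b (Z.of_nat i - Z.of_nat (size w).-1)%Z | i <- iota 0 (size w)] &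
        forall i, y i = b (Z.of_nat i)].

Definition significant (X : (nat -> A) -> Prop) (w : seq A) : Prop :=
  lang X w /\
  (size w = 1 \/
   (2 <= size w /\
    (forall y, fol X w y -> fol X (behead w) y) /\
    (exists y, fol X (behead w) y /\ ~ fol X w y))).

Definition is_sig (X : (nat -> A) -> Prop) (w s : seq A) : Prop :=
  [/\ suffix s w, significant X s &
      forall s', suffix s' w -> significant X s' -> size s' <= size s].

Definition hb_edge (X : (nat -> A) -> Prop) (al be : seq A) : Prop :=
  significant X al /\ significant X be /\
  exists b : A, lang X (rcons al b) /\ is_sig X (rcons al b) be.

Definition hb_path (X : (nat -> A) -> Prop) (p : seq (seq A)) : Prop :=
  (forall i, i < size p -> significant X (nth [::] p i)) /\
  (forall i, i.+1 < size p -> hb_edge X (nth [::] p i) (nth [::] p i.+1)).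

Definition last_symbol (w : seq A) : option A := ohead (rev w).

Definition pihat (p : seq (seq A)) : seq (option A) := map last_symbol p.

End HB.

From Stdlib Require Import ZArith.
From mathcomp Require Import all_boot.
Set Implicit Arguments. Unset Strict Implicit.

(* From a vertex al, the arrow labelled by the symbol b leads to
   sig(al b), whose last symbol is b.  So a path is determined by its start
   vertex and its hat-pi word, and a start vertex of length 1 is its own last
   symbol; induction along the path gives the nontrivial direction. *)

Lemma suffix_inj_size (T : eqType) (s1 s2 w : seq T) :
  suffix s1 w -> suffix s2 w -> size s1 = size s2 -> s1 = s2.
Proof. by rewrite !suffixE => /eqP e1 /eqP e2 eq_size; rewrite -e1 -e2 eq_size. Qed.

Lemma last_symbol_rcons (A : finType) (s : seq A) (x : A) :
  last_symbol (rcons s x) = Some x.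
Proof. by rewrite /last_symbol rev_rcons. Qed.

Lemma last_symbol_suffix_rcons (A : finType) (s w : seq A) (b : A) :
  s != [::] -> suffix s (rcons w b) -> last_symbol s = Some b.
Proof.
by case/lastP: s => // s x _; rewrite suffix_rcons last_symbol_rcons => /andP[/eqP ->].
Qed.

Lemma last_symbol_size1 (A : finType) (s t : seq A) :
  size s = 1 -> size t = 1 -> last_symbol s = last_symbol t -> s = t.
Proof. by case: s => [|x []] //; case: t => [|y []] // _ _ [->]. Qed.

Section SignificantSuffix.
Variables (A : finType) (X : (nat -> A) -> Prop).

Lemma significant_neq_nil (s : seq A) : significant X s -> s != [::].
Proof. by case: s => // [[_ [|[]]]]. Qed.

Lemma is_sig_inj (w s1 s2 : seq A) : is_sig X w s1 -> is_sig X w s2 -> s1 = s2.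
Proof.
move=> [suf1 sig1 max1] [suf2 sig2 max2]; apply: (suffix_inj_size suf1 suf2).
by apply/eqP; rewrite eqn_leq max2 // max1.
Qed.

Lemma hb_edge_label (al be : seq A) :
  hb_edge X al be -> exists2 b, last_symbol be = Some b & is_sig X (rcons al b) be.
Proof.
move=> [_ [sigbe [b [_ sig_al_b]]]]; exists b => //.
by case: sig_al_b => suf _ _; apply: last_symbol_suffix_rcons (significant_neq_nil sigbe) suf.
Qed.

Lemma hb_edge_inj (al be1 be2 : seq A) :
  hb_edge X al be1 -> hb_edge X al be2 ->
  last_symbol be1 = last_symbol be2 -> be1 = be2.
Proof.
move=> /hb_edge_label[b1 -> sig1] /hb_edge_label[b2 -> sig2] [eb].
by rewrite eb in sig1; apply: is_sig_inj sig1 sig2.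
Qed.

End SignificantSuffix.

Lemma nth_pihat (A : finType) (p : seq (seq A)) (i : nat) :
  i < size p -> nth None (pihat p) i = last_symbol (nth [::] p i).
Proof. by move=> lt_i; rewrite (nth_map [::]). Qed.

Theorem theorem5p3 (A : finType) (X : (nat -> A) -> Prop)
  (hX : one_sided_subshift X) (n : nat) (al be : seq (seq A)) :
  0 < n -> size al = n -> size be = n ->
  hb_path X al -> hb_path X be ->
  size (nth [::] al 0) = 1 -> size (nth [::] be 0) = 1 ->
  (pihat al = pihat be <-> (forall i, i < n -> nth [::] al i = nth [::] be i)).
Proof.
move=> _ size_al size_be [_ edge_al] [_ edge_be] al0 be0; split; last first.
  move=> eq_al_be; congr (map _ _); apply: (eq_from_nth (x0 := [::])).
    by rewrite size_al size_be.
  by move=> i; rewrite size_al => /eq_al_be.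
move=> eq_pihat.
have eq_last i : i < n -> last_symbol (nth [::] al i) = last_symbol (nth [::] be i).
  by move=> lt_in; rewrite -!nth_pihat ?size_al ?size_be ?eq_pihat.
elim=> [|i IHi] lt_in; first exact: last_symbol_size1 (eq_last 0 lt_in).
apply: (hb_edge_inj (edge_al i _)); first by rewrite size_al.
- by rewrite IHi ?(ltnW lt_in) //; apply: edge_be; rewrite size_be.
- exact: eq_last.
Qed.
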